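(* Let $K\subset\mathbb{R}^d$ be a convex body (not necessarily centrally symmetric) with parameter of asymmetry $\sigma$. Let $\mathcal{K}=\{o_i+\tau_iK : i=1,\dots,n\}$ with $o_i\in\mathbb{R}^d$ and $\tau_1,\dots,\tau_n>0$ be a non-separable family of positive homothetic copies of $K$. Then there is a translate of $\frac{\sigma+1}{2}\left(\sum_{i=1}^n\tau_i\right)K$ that covers $\bigcup\mathcal{K}$.
   Context: A convex body is a compact convex set with nonempty interior. A family $\mathcal{K}$ of convex bodies in $\mathbb{R}^d$ is called non-separable if every hyperplane $H$ that intersects $\operatorname{conv}\bigcup\mathcal{K}$ intersects some member of $\mathcal{K}$. For a convex body $K$, the parameter of asymmetry is $\sigma=\min_{q\in\operatorname{int}K}\min\{\mu>0 : (K-q)\subset-\mu(K-q)\}$. Equivalently, it is $\min_{q\in\operatorname{int}K}\min\{\mu>0:(K-q)^\circ\subset-\mu(K-q)^\circ\}$, where $L^\circ=\{p:\langle p,x\rangle\le1\ \forall x\in L\}$ denotes the polar body. *)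

From Stdlib Require Import Reals Lra.
From Stdlib Require Fin List.
Open Scope R_scope.

Definition point (d : nat) := Fin.t d -> R.

Fixpoint sumFin (d : nat) : (Fin.t d -> R) -> R :=
  match d return (Fin.t d -> R) -> R with
  | O => fun _ => 0
  | S m => fun f => f Fin.F1 + sumFin m (fun i => f (Fin.FS i))
  end.

Definition vadd {d} (x y : point d) : point d := fun i => x i + y i.
Definition vsub {d} (x y : point d) : point d := fun i => x i - y i.
Definition vscale {d} (c : R) (x : point d) : point d := fun i => c * x i.
Definition dot {d} (x y : point d) : R := sumFin d (fun i => x i * y i).
Definition vnorm {d} (x : point d) : R := sqrt (dot x x).

Definition pset (d : nat) := point d -> Prop.

Definition ball {d} (c : point d) (r : R) : pset d :=
  fun x => vnorm (vsub x c) < r.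

Definition is_open {d} (U : pset d) : Prop :=
  forall x, U x -> exists r, 0 < r /\ forall y, ball x r y -> U y.

Definition compact {d} (K : pset d) : Prop :=
  forall (I : Type) (U : I -> pset d),
    (forall i, is_open (U i)) ->
    (forall x, K x -> exists i, U i x) ->
    exists l : list I, forall x, K x -> exists i, List.In i l /\ U i x.

Definition convex {d} (K : pset d) : Prop :=
  forall x y t, K x -> K y -> 0 <= t <= 1 ->
    K (vadd (vscale (1 - t) x) (vscale t y)).

Definition interior {d} (K : pset d) : pset d :=
  fun x => exists r, 0 < r /\ forall y, ball x r y -> K y.

Definition convex_body {d} (K : pset d) : Prop :=
  compact K /\ convex K /\ exists x, interior K x.

Definition conv {d} (S : pset d) : pset d :=
  fun x => forall C : pset d, convex C -> (forall y, S y -> C y) -> C x.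

Definition asym_incl {d} (K : pset d) (q : point d) (mu : R) : Prop :=
  forall x, K x -> exists y, K y /\ vsub x q = vscale (- mu) (vsub y q).

(* sigma is the parameter of asymmetry of K:
   min over q in int K of min { mu > 0 : (K - q) ⊂ -mu (K - q) } *)
Definition asymmetry {d} (K : pset d) (sigma : R) : Prop :=
  0 < sigma /\
  (exists q, interior K q /\ asym_incl K q sigma) /\
  (forall q mu, interior K q -> 0 < mu -> asym_incl K q mu -> sigma <= mu).

Definition homot {d} (o : point d) (tau : R) (K : pset d) : pset d :=
  fun x => exists y, K y /\ x = vadd o (vscale tau y).

(* union of the family { o_i + tau_i K : i < n } (indices 0..n-1) *)
Definition fam_union {d} (n : nat) (o : nat -> point d) (tau : nat -> R)
  (K : pset d) : pset d :=
  fun x => exists i, (i < n)%nat /\ homot (o i) (tau i) K x.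

(* hyperplane { x | <a, x> = c }, a <> 0 *)
Definition nonzero {d} (a : point d) : Prop := exists i, a i <> 0.

Definition non_separable {d} (n : nat) (o : nat -> point d) (tau : nat -> R)
  (K : pset d) : Prop :=
  forall (a : point d) (c : R), nonzero a ->
    (exists x, conv (fam_union n o tau K) x /\ dot a x = c) ->
    exists i x, (i < n)%nat /\ homot (o i) (tau i) K x /\ dot a x = c.

Fixpoint sumR (n : nat) (f : nat -> R) : R :=
  match n with O => 0 | S m => sumR m f + f m end.

(* Let q be a centre of asymmetry of K, Lambda = sum tau_i and lambda = (sigma+1)/2 Lambda.
   Translate lambda K so that lambda q lands on the tau-weighted mean c of the points
   o_i + tau_i q.  If a point of some copy were not covered, a linear functional a would
   separate it from the translate.  Along a, the copy o_i + tau_i K projects to an interval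
   [alpha_i - tau_i G, alpha_i + tau_i H], where H and G are the widths of K on either side
   of q, so that H <= sigma G and G <= sigma H (hence sigma >= 1); non-separability makes
   the union of these intervals an interval.  Consequently each right endpoint r_i lies
   below the largest one by at most (H + G) times the weight of the copies ending further
   right, and summing gives
     Lambda (r_j - <a, c>) <= (H + G) S + H Q <= (sigma+1)/2 H (2 S + Q) <= lambda Lambda H,
   with S = sum_{r_i < r_k} tau_i tau_k and Q = sum tau_i^2, since 2 S + Q <= Lambda^2:
   the projection of the point stays below the support value of the translate. *)

From Stdlib Require Import Reals Lra Psatz FunctionalExtensionality Classical.
From Stdlib Require Fin List.
Open Scope R_scope.

Lemma sumFin_ext d (f g : Fin.t d -> R) :
  (forall i, f i = g i) -> sumFin d f = sumFin d g.
Proof. induction d; simpl; intros H; auto. rewrite H; f_equal; auto. Qed.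

Lemma sumFin_plus d (f g : Fin.t d -> R) :
  sumFin d (fun i => f i + g i) = sumFin d f + sumFin d g.
Proof. induction d; simpl; [lra|]. rewrite IHd; ring. Qed.

Lemma sumFin_scale d c (f : Fin.t d -> R) :
  sumFin d (fun i => c * f i) = c * sumFin d f.
Proof. induction d; simpl; [lra|]. rewrite IHd; ring. Qed.

Lemma sumFin_le d (f g : Fin.t d -> R) :
  (forall i, f i <= g i) -> sumFin d f <= sumFin d g.
Proof.
  induction d; simpl; intros H; [lra|].
  pose proof (H Fin.F1); pose proof (IHd (fun i => f (Fin.FS i)) (fun i => g (Fin.FS i)) (fun i => H _)).
  lra.
Qed.

Lemma sumFin_zero d : sumFin d (fun _ => 0) = 0.
Proof. induction d; simpl; [|rewrite IHd]; lra. Qed.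

Lemma sumFin_nonneg d (f : Fin.t d -> R) : (forall i, 0 <= f i) -> 0 <= sumFin d f.
Proof. intros H. rewrite <- (sumFin_zero d). now apply sumFin_le. Qed.

Lemma sumR_ext n f g :
  (forall i, (i < n)%nat -> f i = g i) -> sumR n f = sumR n g.
Proof. induction n; simpl; intros H; auto. rewrite IHn, H; auto; intros; apply H; lia. Qed.

Lemma sumR_plus n f g : sumR n (fun i => f i + g i) = sumR n f + sumR n g.
Proof. induction n; simpl; [lra|]. rewrite IHn; ring. Qed.

Lemma sumR_scale n c f : sumR n (fun i => c * f i) = c * sumR n f.
Proof. induction n; simpl; [lra|]. rewrite IHn; ring. Qed.

Lemma sumR_le n f g :
  (forall i, (i < n)%nat -> f i <= g i) -> sumR n f <= sumR n g.
Proof.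
  induction n; simpl; intros H; [lra|].
  assert (sumR n f <= sumR n g) by (apply IHn; intros; apply H; lia).
  assert (f n <= g n) by (apply H; lia). lra.
Qed.

Lemma sumR_zero n : sumR n (fun _ => 0) = 0.
Proof. induction n; simpl; [|rewrite IHn]; lra. Qed.

Lemma sumR_nonneg n f : (forall i, (i < n)%nat -> 0 <= f i) -> 0 <= sumR n f.
Proof. intros H. rewrite <- (sumR_zero n). now apply sumR_le. Qed.

Lemma sumR_ge_term n f i :
  (forall k, (k < n)%nat -> 0 <= f k) -> (i < n)%nat -> f i <= sumR n f.
Proof.
  induction n; simpl; intros H Hi; [lia|].
  assert (0 <= sumR n f) by (apply sumR_nonneg; intros; apply H; lia).
  assert (0 <= f n) by (apply H; lia).
  destruct (Nat.eq_dec i n) as [->|Hne]; [lra|].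
  assert (f i <= sumR n f) by (apply IHn; [intros; apply H|]; lia). lra.
Qed.

Lemma sumR_swap n m (f : nat -> nat -> R) :
  sumR n (fun i => sumR m (fun k => f i k)) = sumR m (fun k => sumR n (fun i => f i k)).
Proof.
  induction n; simpl.
  - now rewrite sumR_zero.
  - now rewrite IHn, <- sumR_plus.
Qed.

Lemma sumR_delta n i (f : nat -> R) : (i < n)%nat ->
  sumR n (fun k => if Nat.eq_dec i k then f k else 0) = f i.
Proof.
  induction n; simpl; intros Hi; [lia|].
  destruct (Nat.eq_dec i n) as [->|Hne].
  - rewrite (sumR_ext n _ (fun _ => 0)), sumR_zero; [ring|].
    intros k Hk; destruct (Nat.eq_dec n k); [lia|auto].
  - rewrite IHn; [ring|lia].
Qed.

Lemma sumFin_sumR d n (f : nat -> Fin.t d -> R) :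
  sumFin d (fun m => sumR n (fun i => f i m)) = sumR n (fun i => sumFin d (f i)).
Proof.
  induction n; simpl.
  - apply sumFin_zero.
  - now rewrite sumFin_plus, IHn.
Qed.

Lemma dot_add_r {d} (a x y : point d) : dot a (vadd x y) = dot a x + dot a y.
Proof. unfold dot. rewrite <- sumFin_plus. apply sumFin_ext. intros; unfold vadd; ring. Qed.

Lemma dot_scale_r {d} (a x : point d) c : dot a (vscale c x) = c * dot a x.
Proof. unfold dot. rewrite <- sumFin_scale. apply sumFin_ext. intros; unfold vscale; ring. Qed.

Lemma dot_scale_l {d} (a x : point d) c : dot (vscale c a) x = c * dot a x.
Proof. unfold dot. rewrite <- sumFin_scale. apply sumFin_ext. intros; unfold vscale; ring. Qed.

Lemma dot_sub_r {d} (a x y : point d) : dot a (vsub x y) = dot a x - dot a y.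
Proof.
  replace (vsub x y) with (vadd x (vscale (-1) y))
    by (apply functional_extensionality; intros; unfold vsub, vadd, vscale; ring).
  rewrite dot_add_r, dot_scale_r. ring.
Qed.

Lemma dot_self_nonneg {d} (x : point d) : 0 <= dot x x.
Proof. apply sumFin_nonneg. intros; nra. Qed.

Lemma dot_self_pos {d} (x : point d) : nonzero x -> 0 < dot x x.
Proof.
  induction d; intros [i Hi]; [inversion i|].
  unfold dot; simpl. revert Hi. pattern i. apply Fin.caseS'.
  - intros. pose proof (dot_self_nonneg (fun j => x (Fin.FS j))). unfold dot in H. nra.
  - intros p Hp. pose proof (IHd (fun j => x (Fin.FS j)) (ex_intro _ p Hp)). unfold dot in H. nra.
Qed.

Definition vsum {d} (n : nat) (f : nat -> point d) : point d :=
  fun m => sumR n (fun i => f i m).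

Lemma dot_vsum {d} (a : point d) n (f : nat -> point d) :
  dot a (vsum n f) = sumR n (fun i => dot a (f i)).
Proof.
  unfold dot, vsum. rewrite <- sumFin_sumR. apply sumFin_ext. intros m.
  rewrite <- sumR_scale. reflexivity.
Qed.

Lemma dot_lower_bound {d} (u e : point d) s :
  0 < s -> - (2 * dot u e) <= s * dot u u + dot e e / s.
Proof.
  intros Hs.
  assert (E : s * dot u u + dot e e / s + 2 * dot u e
              = sumFin d (fun i => s * (u i * u i) + / s * (e i * e i) + 2 * (u i * e i)))
    by (rewrite !sumFin_plus, !sumFin_scale; unfold dot, Rdiv; ring).
  enough (0 <= sumFin d (fun i => s * (u i * u i) + / s * (e i * e i) + 2 * (u i * e i))) by lra.
  apply sumFin_nonneg. intros i.
  replace (s * (u i * u i) + / s * (e i * e i) + 2 * (u i * e i))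
    with ((s * u i + e i) * (s * u i + e i) * / s) by (field; lra).
  apply Rmult_le_pos; [apply Rle_0_sqr|left; apply Rinv_0_lt_compat; lra].
Qed.

Definition remove_index (b : nat -> bool) (k0 : nat) : nat -> bool :=
  fun k => andb (b k) (negb (Nat.eqb k k0)).

Lemma sumR_if_remove n (b : nat -> bool) (w : nat -> R) k0 :
  b k0 = true -> (k0 < n)%nat ->
  sumR n (fun k => if b k then w k else 0)
  = sumR n (fun k => if remove_index b k0 k then w k else 0) + w k0.
Proof.
  induction n; simpl; intros Hb Hk; [lia|]. unfold remove_index at 2.
  destruct (Nat.eq_dec n k0) as [->|Hne].
  - rewrite Hb, Nat.eqb_refl; simpl.
    rewrite (sumR_ext k0 (fun k => if remove_index b k0 k then w k else 0)
                         (fun k => if b k then w k else 0)); [ring|].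
    intros i Hi. unfold remove_index.
    now rewrite (proj2 (Nat.eqb_neq i k0)), Bool.andb_true_r by lia.
  - rewrite (proj2 (Nat.eqb_neq n k0)), Bool.andb_true_r by auto.
    rewrite (IHn Hb); [ring|lia].
Qed.

Lemma sumR_if_nonneg n (b : nat -> bool) (w : nat -> R) :
  (forall k, (k < n)%nat -> b k = true -> 0 <= w k) ->
  0 <= sumR n (fun k => if b k then w k else 0).
Proof.
  intros H. apply sumR_nonneg. intros k Hk.
  destruct (b k) eqn:E; [now apply H|lra].
Qed.

Definition union_is_interval (n : nat) (l r : nat -> R) : Prop :=
  forall c, (exists i, (i < n)%nat /\ l i <= c) -> (exists k, (k < n)%nat /\ c <= r k) ->
  exists m, (m < n)%nat /\ l m <= c <= r m.

Lemma sumR_ones n : sumR n (fun _ => 1) = INR n.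
Proof. induction n; [reflexivity|]. rewrite S_INR; simpl; rewrite IHn; lra. Qed.

(* Induction on the number of active intervals: remove an interval [[l, r]] containing
   [B], cover [[A, l - e]] by the others, and let [e] tend to 0. *)
Lemma interval_cover_length n (l r : nat -> R) (b : nat -> bool) A B :
  (forall k, (k < n)%nat -> b k = true -> l k <= r k) ->
  (forall c, A <= c <= B -> exists k, (k < n)%nat /\ b k = true /\ l k <= c <= r k) ->
  B - A <= sumR n (fun k => if b k then r k - l k else 0).
Proof.
  pose (count := fun b : nat -> bool => sumR n (fun k => if b k then 1 else 0)).
  assert (Hcount_nonneg : forall b, 0 <= count b)
    by (intros; apply sumR_if_nonneg; intros; lra).
  enough (Hind : forall N b, count b < INR N ->
    (forall k, (k < n)%nat -> b k = true -> l k <= r k) ->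
    forall A B, (forall c, A <= c <= B -> exists k, (k < n)%nat /\ b k = true /\ l k <= c <= r k) ->
    B - A <= sumR n (fun k => if b k then r k - l k else 0)).
  { intros; apply (Hind (S n)); auto. rewrite S_INR, <- sumR_ones.
    enough (count b <= sumR n (fun _ => 1)) by lra.
    apply sumR_le; intros k _; destruct (b k); lra. }
  induction N as [|N IHN]; intros b' Hc Hlr A' B' Hcov.
  { specialize (Hcount_nonneg b'); simpl in Hc; lra. }
  pose proof (sumR_if_nonneg n b' (fun k => r k - l k)
                ltac:(intros k Hk Hb; specialize (Hlr k Hk Hb); lra)).
  destruct (Rlt_le_dec B' A'); [lra|].
  destruct (Hcov B') as [k0 [Hk0 [Hb0 [Hl0 Hr0]]]]; [lra|].
  set (b'' := remove_index b' k0).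
  assert (Hlr' : forall k, (k < n)%nat -> b'' k = true -> l k <= r k)
    by (intros k Hk E; apply Bool.andb_true_iff in E; apply Hlr; tauto).
  rewrite (sumR_if_remove n b' (fun k => r k - l k) k0 Hb0 Hk0).
  fold b''.
  pose proof (sumR_if_nonneg n b'' (fun k => r k - l k)
                ltac:(intros k Hk Hb; specialize (Hlr' k Hk Hb); lra)).
  destruct (Rle_lt_dec (l k0) A'); [lra|].
  enough (l k0 - A' <= sumR n (fun k => if b'' k then r k - l k else 0)) by lra.
  apply Rle_plus_epsilon. intros e He.
  enough (l k0 - e - A' <= sumR n (fun k => if b'' k then r k - l k else 0)) by lra.
  apply IHN; [|exact Hlr'|].
  - pose proof (sumR_if_remove n b' (fun _ => 1) k0 Hb0 Hk0) as Hrem.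
    fold b'' in Hrem. rewrite S_INR in Hc. unfold count in *. lra.
  - intros c Hc'. destruct (Hcov c) as [k [Hk [Hbk Hlk]]]; [lra|].
    exists k. repeat split; auto; try lra. unfold b'', remove_index. rewrite Hbk; simpl.
    destruct (Nat.eqb_spec k k0) as [->|]; [lra|auto].
Qed.

Definition Rltb (x y : R) : bool := if Rlt_dec x y then true else false.

Lemma gap_le_sum_above n (l r : nat -> R) i j :
  (forall k, (k < n)%nat -> l k <= r k) -> union_is_interval n l r ->
  (i < n)%nat -> (j < n)%nat ->
  r j - r i <= sumR n (fun k => if Rltb (r i) (r k) then r k - l k else 0).
Proof.
  intros Hlr Hint Hi Hj. apply Rle_plus_epsilon. intros e He.
  enough (r j - (r i + e) <= sumR n (fun k => if Rltb (r i) (r k) then r k - l k else 0)) by lra.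
  apply interval_cover_length; [intros; auto|].
  intros c Hc. destruct (Hint c) as [m [Hm Hlm]].
  - exists i. split; auto. specialize (Hlr i Hi). lra.
  - exists j. split; auto. lra.
  - exists m. repeat split; auto; try lra. unfold Rltb.
    destruct (Rlt_dec (r i) (r m)); [auto|lra].
Qed.

Lemma ordered_pairs_sum_le n (tau r : nat -> R) :
  (forall i, (i < n)%nat -> 0 <= tau i) ->
  2 * sumR n (fun i => sumR n (fun k => if Rltb (r i) (r k) then tau i * tau k else 0))
    + sumR n (fun i => tau i * tau i)
  <= sumR n tau * sumR n tau.
Proof.
  intros Htau.
  set (S := sumR n (fun i => sumR n (fun k => if Rltb (r i) (r k) then tau i * tau k else 0))).
  assert (HS : S = sumR n (fun i => sumR n (fun k => if Rltb (r k) (r i) then tau k * tau i else 0)))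
    by apply (sumR_swap n n (fun i k => if Rltb (r i) (r k) then tau i * tau k else 0)).
  assert (HQ : sumR n (fun i => tau i * tau i)
               = sumR n (fun i => sumR n (fun k => if Nat.eq_dec i k then tau i * tau k else 0)))
    by (apply sumR_ext; intros i Hi; now rewrite (sumR_delta n i (fun k => tau i * tau k))).
  assert (HL : sumR n tau * sumR n tau = sumR n (fun i => sumR n (fun k => tau i * tau k))).
  { rewrite <- sumR_scale. apply sumR_ext. intros. rewrite sumR_scale. ring. }
  replace (2 * S) with (S + S) by ring.
  rewrite HQ, HL. rewrite HS at 2. unfold S. rewrite <- !sumR_plus.
  apply sumR_le. intros i Hi. rewrite <- !sumR_plus. apply sumR_le. intros k Hk.
  pose proof (Htau i Hi); pose proof (Htau k Hk). unfold Rltb.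
  destruct (Nat.eq_dec i k) as [Heq|];
    destruct (Rlt_dec (r i) (r k)); destruct (Rlt_dec (r k) (r i)); try subst k; nra.
Qed.

Lemma right_end_sub_centroid_le n (tau al : nat -> R) H G sigma j :
  (forall i, (i < n)%nat -> 0 < tau i) -> 0 <= H -> 0 <= G ->
  H <= sigma * G -> G <= sigma * H ->
  union_is_interval n (fun i => al i - tau i * G) (fun i => al i + tau i * H) ->
  (j < n)%nat ->
  al j + tau j * H - sumR n (fun i => tau i * al i) / sumR n tau
  <= (sigma + 1) / 2 * sumR n tau * H.
Proof.
  intros Htau HH HG H1 H2 Hint Hj.
  set (r := fun i => al i + tau i * H). set (l := fun i => al i - tau i * G).
  set (Lam := sumR n tau).
  set (S := sumR n (fun i => sumR n (fun k => if Rltb (r i) (r k) then tau i * tau k else 0))).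
  set (Q := sumR n (fun i => tau i * tau i)).
  assert (HLam : 0 < Lam).
  { pose proof (Htau j Hj).
    enough (tau j <= Lam) by lra.
    apply sumR_ge_term; auto. intros; left; auto. }
  assert (HS : 0 <= S).
  { apply sumR_nonneg; intros i Hi; apply sumR_nonneg; intros k Hk.
    pose proof (Htau i Hi); pose proof (Htau k Hk). destruct (Rltb _ _); nra. }
  assert (HQ : 0 <= Q) by (apply sumR_nonneg; intros; nra).
  assert (Hpairs : 2 * S + Q <= Lam * Lam)
    by (apply ordered_pairs_sum_le; intros; left; auto).
  assert (Hsplit : Lam * r j - sumR n (fun i => tau i * al i)
                   = sumR n (fun i => tau i * (r j - r i)) + H * Q).
  { assert (E : sumR n (fun i => tau i * (r j - r i))
               = sumR n (fun i => r j * tau i + (-1) * (tau i * al i) + (- H) * (tau i * tau i)))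
      by (apply sumR_ext; intros; unfold r; ring).
    rewrite E, !sumR_plus, !sumR_scale. unfold Lam, Q. ring. }
  assert (Hgaps : sumR n (fun i => tau i * (r j - r i)) <= (H + G) * S).
  { unfold S. rewrite <- sumR_scale. apply sumR_le. intros i Hi.
    eapply Rle_trans.
    { apply Rmult_le_compat_l; [left; auto|].
      apply (gap_le_sum_above n l r i j); auto.
      intros k Hk. pose proof (Htau k Hk). unfold l, r. nra. }
    rewrite <- !sumR_scale. apply Req_le, sumR_ext. intros k Hk.
    destruct (Rltb _ _); unfold r, l; ring. }
  assert (Hmain : Lam * r j - sumR n (fun i => tau i * al i) <= (sigma + 1) / 2 * H * (Lam * Lam)).
  { destruct (Req_dec H 0) as [H0|Hpos].
    - subst H. assert (G = 0) by lra. subst G. lra.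
    - assert (1 <= sigma) by nra.
      assert ((H + G) * S <= (1 + sigma) * H * S) by nra.
      assert (0 <= H * Q) by (apply Rmult_le_pos; lra).
      assert (H * Q <= (sigma + 1) / 2 * H * Q) by nra.
      assert ((sigma + 1) / 2 * H * (2 * S + Q) <= (sigma + 1) / 2 * H * (Lam * Lam))
        by (apply Rmult_le_compat_l; nra).
      lra. }
  apply (Rmult_le_reg_l Lam); auto.
  replace (Lam * (al j + tau j * H - sumR n (fun i => tau i * al i) / Lam))
    with (Lam * r j - sumR n (fun i => tau i * al i)) by (unfold r; field; lra).
  lra.
Qed.

Definition lower_semicontinuous {d} (f : point d -> R) : Prop :=
  forall y c, c < f y -> exists r, 0 < r /\ forall y', ball y r y' -> c < f y'.

Lemma dot_self_lt_of_vnorm_lt {d} (e : point d) r : vnorm e < r -> dot e e < r * r.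
Proof.
  unfold vnorm. intros H. pose proof (dot_self_nonneg e). pose proof (sqrt_pos (dot e e)).
  rewrite <- (sqrt_sqrt (dot e e)) by lra. nra.
Qed.

Lemma dot_gt_of_vnorm_small {d} (u : point d) delta : 0 < delta ->
  exists r, 0 < r /\ forall e, vnorm e < r -> - delta < 2 * dot u e.
Proof.
  intros Hd. pose proof (dot_self_nonneg u).
  set (s := delta / (2 * (dot u u + 1))).
  assert (Hs : 0 < s) by (unfold s; apply Rdiv_lt_0_compat; lra).
  assert (Hsu : s * dot u u < delta / 2).
  { unfold s. apply (Rmult_lt_reg_r (2 * (dot u u + 1))); [lra|].
    field_simplify; [nra|lra]. }
  exists (Rmin 1 (s * delta / 2)). split.
  { apply Rmin_glb_lt; [lra|]. apply Rdiv_lt_0_compat; [nra|lra]. }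
  intros e He. pose proof (dot_lower_bound u e s Hs).
  pose proof (Rmin_l 1 (s * delta / 2)); pose proof (Rmin_r 1 (s * delta / 2)).
  pose proof (dot_self_lt_of_vnorm_lt e _ He). pose proof (sqrt_pos (dot e e)).
  assert (dot e e < s * delta / 2) by (unfold vnorm in He; nra).
  assert (dot e e / s < delta / 2).
  { apply (Rmult_lt_reg_r s); [lra|]. unfold Rdiv. rewrite Rmult_assoc, Rinv_l; lra. }
  lra.
Qed.

Lemma dot_self_add {d} (x e : point d) :
  dot (vadd x e) (vadd x e) = dot x x + 2 * dot x e + dot e e.
Proof.
  unfold dot. rewrite <- sumFin_scale, <- !sumFin_plus. apply sumFin_ext.
  intros; unfold vadd; ring.
Qed.

Lemma vadd_vsub {d} (x y : point d) : vadd x (vsub y x) = y.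
Proof. apply functional_extensionality; intros; unfold vadd, vsub; ring. Qed.

Lemma dot_lsc {d} (a : point d) : lower_semicontinuous (dot a).
Proof.
  intros y c Hc. destruct (dot_gt_of_vnorm_small a (2 * (dot a y - c))) as [r [Hr Hb]]; [lra|].
  exists r. split; auto. intros y' Hy'. specialize (Hb _ Hy').
  rewrite <- (vadd_vsub y y'), dot_add_r. lra.
Qed.

Lemma dist_sq_lsc {d} (w : point d) :
  lower_semicontinuous (fun y => dot (vsub y w) (vsub y w)).
Proof.
  intros y c Hc. destruct (dot_gt_of_vnorm_small (vsub y w) (dot (vsub y w) (vsub y w) - c))
    as [r [Hr Hb]]; [lra|].
  exists r. split; auto. intros y' Hy'. specialize (Hb _ Hy').
  replace (vsub y' w) with (vadd (vsub y w) (vsub y' y))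
    by (apply functional_extensionality; intros; unfold vadd, vsub; ring).
  rewrite dot_self_add. pose proof (dot_self_nonneg (vsub y' y)). lra.
Qed.

Lemma list_min {I : Type} (g : I -> R) (l : list I) i0 : List.In i0 l ->
  exists i, List.In i l /\ forall j, List.In j l -> g i <= g j.
Proof.
  revert i0. induction l as [|a l IHl]; intros i0 Hi0; [destruct Hi0|].
  destruct l as [|b l'].
  - exists a. split; [left; auto|]. intros j [<-|[]]; lra.
  - destruct (IHl b) as [i [Hi Hm]]; [left; auto|].
    destruct (Rle_lt_dec (g a) (g i)).
    + exists a. split; [left; auto|]. intros j [<-|Hj]; [lra|]. specialize (Hm j Hj). lra.
    + exists i. split; [right; auto|]. intros j [<-|Hj]; [lra|auto].
Qed.

(* If no minimum existed, the open sets [{y | f z < f y}] (z in C) would cover C;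
   the minimiser over a finite subcover contradicts the cover. *)
Lemma compact_attains_min {d} (C : pset d) (f : point d -> R) :
  compact C -> (exists x, C x) -> lower_semicontinuous f ->
  exists p, C p /\ forall y, C y -> f p <= f y.
Proof.
  intros Hc [x0 Hx0] Hf. apply NNPP. intro Hno.
  assert (Hlower : forall p, C p -> exists y, C y /\ f y < f p).
  { intros p Hp. apply NNPP. intro H. apply Hno. exists p. split; auto. intros y Hy.
    destruct (Rle_lt_dec (f p) (f y)); auto. exfalso. apply H. exists y; auto. }
  destruct (Hc {z : point d | C z} (fun z y => f (proj1_sig z) < f y)) as [l Hl].
  - intros [z Hz] y Hy. now apply Hf.
  - intros x Hx. destruct (Hlower x Hx) as [z [Hz Hfz]]. now exists (exist _ z Hz).
  - destruct (Hl x0 Hx0) as [i0 [Hi0 _]].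
    destruct (list_min (fun z : {z | C z} => f (proj1_sig z)) l i0 Hi0) as [[p Hp] [Hi Hm]].
    destruct (Hlower p Hp) as [y [Hy Hfy]]. destruct (Hl y Hy) as [j [Hj Hfj]].
    specialize (Hm j Hj). simpl in *. lra.
Qed.

Lemma dot_attains_min_max {d} (K : pset d) (a : point d) :
  compact K -> (exists x, K x) ->
  exists ymin ymax, K ymin /\ K ymax /\
    forall y, K y -> dot a ymin <= dot a y <= dot a ymax.
Proof.
  intros Hc Hne.
  destruct (compact_attains_min K (dot a) Hc Hne (dot_lsc a)) as [ymin [Hmin Hminle]].
  destruct (compact_attains_min K (dot (vscale (-1) a)) Hc Hne (dot_lsc _)) as [ymax [Hmax Hmaxle]].
  exists ymin, ymax. do 2 (split; [auto|]). intros y Hy.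
  specialize (Hminle y Hy). specialize (Hmaxle y Hy). rewrite !dot_scale_l in Hmaxle. lra.
Qed.

Lemma nonneg_of_quadratic_nonneg B D : 0 <= D ->
  (forall t, 0 < t <= 1 -> 0 <= 2 * t * B + t * t * D) -> 0 <= B.
Proof.
  intros HD Hq. destruct (Rle_lt_dec 0 B); auto. exfalso.
  set (t := Rmin 1 (- B / (D + 1))).
  assert (Ht0 : 0 < t) by (apply Rmin_glb_lt; [lra|apply Rdiv_lt_0_compat; lra]).
  assert (Ht1 : t <= 1) by apply Rmin_l.
  assert (HtD : t * (D + 1) <= - B).
  { pose proof (Rmin_r 1 (- B / (D + 1))) as Ht. fold t in Ht.
    apply (Rmult_le_compat_r (D + 1)) in Ht; [|lra].
    unfold Rdiv in Ht. rewrite Rmult_assoc, Rinv_l in Ht; lra. }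
  specialize (Hq t (conj Ht0 Ht1)). nra.
Qed.

Lemma nearest_point_obtuse {d} (K : pset d) (w p : point d) :
  convex K -> K p -> (forall y, K y -> dot (vsub p w) (vsub p w) <= dot (vsub y w) (vsub y w)) ->
  forall y, K y -> dot (vsub w p) y <= dot (vsub w p) p.
Proof.
  intros Hconv Hp Hmin y Hy.
  enough (0 <= dot (vsub p w) (vsub y p)).
  { replace (vsub p w) with (vscale (-1) (vsub w p)) in H
      by (apply functional_extensionality; intros; unfold vscale, vsub; ring).
    rewrite dot_scale_l, dot_sub_r in H. lra. }
  apply (nonneg_of_quadratic_nonneg _ (dot (vsub y p) (vsub y p))); [apply dot_self_nonneg|].
  intros t Ht.
  assert (Hyt : K (vadd (vscale (1 - t) p) (vscale t y))) by (apply Hconv; auto; lra).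
  specialize (Hmin _ Hyt).
  replace (vsub (vadd (vscale (1 - t) p) (vscale t y)) w)
    with (vadd (vsub p w) (vscale t (vsub y p))) in Hmin
    by (apply functional_extensionality; intros; unfold vadd, vscale, vsub; ring).
  rewrite dot_self_add, !dot_scale_r, dot_scale_l in Hmin.
  lra.
Qed.

(* The nearest point [p] of [K] to [w] yields the separating functional [w - p]. *)
Lemma convex_compact_mem_of_support {d} (K : pset d) (w : point d) :
  compact K -> convex K -> (exists x, K x) ->
  (forall a, nonzero a -> exists y, K y /\ dot a w <= dot a y) -> K w.
Proof.
  intros Hc Hconv Hne Hsupp. apply NNPP. intros Hw.
  destruct (compact_attains_min K _ Hc Hne (dist_sq_lsc w)) as [p [Hp Hmin]].
  set (a := vsub w p).
  assert (Ha : nonzero a).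
  { apply NNPP. intros Hz. apply Hw. replace w with p; auto.
    apply functional_extensionality. intros i.
    destruct (Req_dec (a i) 0) as [E|E]; [unfold a, vsub in E; lra|].
    exfalso. apply Hz. now exists i. }
  destruct (Hsupp a Ha) as [y [Hy Hwy]].
  pose proof (nearest_point_obtuse K w p Hconv Hp Hmin y Hy) as Hobtuse. fold a in Hobtuse.
  pose proof (dot_self_pos a Ha).
  assert (dot a a = dot a w - dot a p) by apply dot_sub_r.
  lra.
Qed.

Lemma interior_mem {d} (K : pset d) q : interior K q -> K q.
Proof.
  intros [r [Hr Hball]]. apply Hball. unfold ball, vnorm.
  replace (dot (vsub q q) (vsub q q)) with 0; [now rewrite sqrt_0|].
  unfold dot. rewrite <- (sumFin_zero d). apply sumFin_ext. intros; unfold vsub; ring.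
Qed.

Lemma dot_homot {d} (a o y : point d) tau :
  dot a (vadd o (vscale tau y)) = dot a o + tau * dot a y.
Proof. now rewrite dot_add_r, dot_scale_r. Qed.

Lemma conv_incl {d} (S : pset d) x : S x -> conv S x.
Proof. intros H C _ HC. auto. Qed.

Lemma conv_convex {d} (S : pset d) : convex (conv S).
Proof. intros x y t Hx Hy Ht C HC HS. apply HC; [apply Hx|apply Hy|]; auto. Qed.

(* Every level between two points of the union is met by the segment joining
   them, which lies in the convex hull. *)
Lemma non_separable_level {d} n (o : nat -> point d) tau K (a x1 x2 : point d) c :
  non_separable n o tau K -> nonzero a ->
  fam_union n o tau K x1 -> fam_union n o tau K x2 -> dot a x1 <= c <= dot a x2 ->
  exists i x, (i < n)%nat /\ homot (o i) (tau i) K x /\ dot a x = c.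
Proof.
  intros Hns Ha Hx1 Hx2 Hc. apply (Hns a c Ha).
  destruct (Req_dec (dot a x1) (dot a x2)) as [Eq|Ne].
  { exists x1. split; [now apply conv_incl|lra]. }
  set (s := (c - dot a x1) / (dot a x2 - dot a x1)).
  assert (Hs : 0 <= s <= 1).
  { unfold s. split.
    - apply Rmult_le_pos; [lra|left; apply Rinv_0_lt_compat; lra].
    - apply (Rmult_le_reg_r (dot a x2 - dot a x1)); [lra|].
      unfold Rdiv. rewrite Rmult_assoc, Rinv_l; lra. }
  exists (vadd (vscale (1 - s) x1) (vscale s x2)). split.
  - apply conv_convex; auto; now apply conv_incl.
  - rewrite dot_add_r, !dot_scale_r. unfold s. field. lra.
Qed.

Lemma asym_support_gaps {d} (K : pset d) q sigma (a ymin ymax : point d) :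
  0 < sigma -> asym_incl K q sigma -> K ymin -> K ymax ->
  (forall y, K y -> dot a ymin <= dot a y <= dot a ymax) ->
  dot a ymax - dot a q <= sigma * (dot a q - dot a ymin) /\
  dot a q - dot a ymin <= sigma * (dot a ymax - dot a q).
Proof.
  intros Hs Hasym Hmin Hmax Hext.
  assert (Hreflect : forall y, K y -> exists y', K y' /\
            dot a y - dot a q = - sigma * (dot a y' - dot a q)).
  { intros y Hy. destruct (Hasym y Hy) as [y' [Hy' E]]. exists y'. split; auto.
    now rewrite <- !dot_sub_r, E, dot_scale_r. }
  destruct (Hreflect ymax Hmax) as [y1 [Hy1 E1]]. destruct (Hreflect ymin Hmin) as [y2 [Hy2 E2]].
  pose proof (Hext y1 Hy1). pose proof (Hext y2 Hy2). split; nra.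
Qed.

Definition centroid {d} n (o : nat -> point d) (tau : nat -> R) (q : point d) : point d :=
  vscale (/ sumR n tau) (vsum n (fun i => vscale (tau i) (vadd (o i) (vscale (tau i) q)))).

Lemma dot_centroid {d} (a : point d) n o tau q :
  dot a (centroid n o tau q)
  = sumR n (fun i => tau i * (dot a (o i) + tau i * dot a q)) / sumR n tau.
Proof.
  unfold centroid. rewrite dot_scale_r, dot_vsum. unfold Rdiv. rewrite Rmult_comm.
  f_equal. apply sumR_ext. intros. now rewrite dot_scale_r, dot_homot.
Qed.

Lemma dot_sub_centroid_le {d} (K : pset d) q sigma n o tau (a ymin ymax x : point d) j :
  0 < sigma -> asym_incl K q sigma -> K q ->
  (forall i, (i < n)%nat -> 0 < tau i) -> non_separable n o tau K -> nonzero a ->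
  K ymin -> K ymax -> (forall y, K y -> dot a ymin <= dot a y <= dot a ymax) ->
  (j < n)%nat -> homot (o j) (tau j) K x ->
  dot a x - dot a (centroid n o tau q)
  <= (sigma + 1) / 2 * sumR n tau * (dot a ymax - dot a q).
Proof.
  intros Hs Hasym Hq Htau Hns Ha Hmin Hmax Hext Hj [y [Hy ->]].
  set (H := dot a ymax - dot a q). set (G := dot a q - dot a ymin).
  set (al := fun i => dot a (o i) + tau i * dot a q).
  destruct (asym_support_gaps K q sigma a ymin ymax) as [H1 H2]; auto.
  pose proof (Hext q Hq).
  assert (Hcopy : forall i z, (i < n)%nat -> homot (o i) (tau i) K z ->
            al i - tau i * G <= dot a z <= al i + tau i * H).
  { intros i z Hi [y' [Hy' ->]]. rewrite dot_homot. pose proof (Htau i Hi).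
    pose proof (Hext y' Hy'). unfold al, H, G. split; nra. }
  assert (Hint : union_is_interval n (fun i => al i - tau i * G) (fun i => al i + tau i * H)).
  { intros c [i [Hi Hic]] [k [Hk Hkc]].
    destruct (non_separable_level n o tau K a (vadd (o i) (vscale (tau i) ymin))
                (vadd (o k) (vscale (tau k) ymax)) c) as [m [z [Hm [Hz Hzc]]]]; auto.
    - exists i. split; auto. now exists ymin.
    - exists k. split; auto. now exists ymax.
    - rewrite !dot_homot. unfold al, H, G in *. lra.
    - exists m. split; auto. rewrite <- Hzc. now apply Hcopy. }
  pose proof (right_end_sub_centroid_le n tau al H G sigma j Htau
                ltac:(unfold H; lra) ltac:(unfold G; lra) H1 H2 Hint Hj).
  pose proof (Hcopy j _ Hj (ex_intro _ y (conj Hy eq_refl))).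
  rewrite dot_centroid. fold H. unfold al in *. lra.
Qed.

Theorem theorem4 (d : nat) (K : pset d) (sigma : R)
  (n : nat) (o : nat -> point d) (tau : nat -> R) :
  convex_body K ->
  asymmetry K sigma ->
  (forall i, (i < n)%nat -> 0 < tau i) ->
  non_separable n o tau K ->
  exists t : point d,
    forall x, fam_union n o tau K x ->
      homot t ((sigma + 1) / 2 * sumR n tau) K x.
Proof.
  intros [Hcomp [Hconv _]] [Hs [[q [Hq Hasym]] _]] Htau Hns.
  pose proof (interior_mem K q Hq) as HKq.
  set (lam := (sigma + 1) / 2 * sumR n tau).
  set (t := vsub (centroid n o tau q) (vscale lam q)).
  exists t. intros x [j [Hj Hx]].
  assert (Hlam : 0 < lam).
  { pose proof (Htau j Hj).
    assert (tau j <= sumR n tau) by (apply sumR_ge_term; auto; intros; left; auto).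
    unfold lam. apply Rmult_lt_0_compat; lra. }
  exists (vscale (/ lam) (vsub x t)). split.
  2:{ apply functional_extensionality. intros m. unfold vadd, vscale, vsub. field. lra. }
  apply convex_compact_mem_of_support; auto; [now exists q|].
  intros a Ha.
  destruct (dot_attains_min_max K a Hcomp (ex_intro _ q HKq)) as [ymin [ymax [Hmin [Hmax Hext]]]].
  exists ymax. split; auto.
  pose proof (dot_sub_centroid_le K q sigma n o tau a ymin ymax x j
                Hs Hasym HKq Htau Hns Ha Hmin Hmax Hext Hj Hx) as Hbound.
  fold lam in Hbound.
  unfold t. rewrite dot_scale_r, !dot_sub_r, dot_scale_r.
  apply (Rmult_le_reg_l lam); auto. rewrite <- Rmult_assoc, Rinv_r by lra.
  lra.
Qed.
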